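(* Consider the problem of maximizing a linear function $g(\mathbf{z})$ over $\mathbf{z}=(\mathbf{x},\mathbf{y})\in\mathbb{R}^{m+n}$ subject to $\mathcal{B}(\mathbf{x},\mathbf{y})\preceq 0$, where $\mathcal{B}(\mathbf{x},\mathbf{y})=F+\sum_i x_iH_i+\sum_j y_jG_j+\sum_{i,j}x_iy_jF_{i,j}$. Run the iterative procedure described below starting from a strictly feasible $\mathbf{z}^0$ (i.e., $\mathcal{B}(\mathbf{z}^0)\prec 0$). Then every iterate $\mathbf{z}^i$ produced by the procedure (for every $i$ for which it is produced) is a feasible solution of this problem, i.e., $\mathcal{B}(\mathbf{z}^i)\preceq 0$.
   Context: $F,H_i,G_j,F_{i,j}$ are constant real symmetric $p\times p$ matrices; $\preceq$ is the positive-semidefinite (Loewner) order. Decompose $\mathcal{B}=\mathcal{B}^+-\mathcal{B}^-$ as follows: $\Gamma$ is the $mp\times np$ block matrix with $(i,j)$ block $\tfrac12F_{i,j}$, $\Omega=(H_1\cdots H_m\ G_1\cdots G_n)$, $M=\begin{pmatrix}0&\Gamma\\ \Gamma^{\mathsf T}&0\end{pmatrix}=V^{\mathsf T}DV$ an eigendecomposition, $D^+$ is $D$ with negative entries set to $0$, $D^-=D^+-D$, $M_1=V^{\mathsf T}D^+V$, $M_2=V^{\mathsf T}D^-V$, $\mathcal{B}^+(\mathbf{z})=(\mathbf{z}\otimes I)^{\mathsf T}M_1(\mathbf{z}\otimes I)+\Omega(\mathbf{z}\otimes I)+F$, $\mathcal{B}^-(\mathbf{z})=(\mathbf{z}\otimes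 I)^{\mathsf T}M_2(\mathbf{z}\otimes I)$ ($I$ the $p\times p$ identity). $\mathcal{D}\mathcal{B}^-(\mathbf{z})(\mathbf{u})=\sum_i u_i\,\partial\mathcal{B}^-/\partial z_i(\mathbf{z})$. The iterative procedure (Algorithm 1, BMI-DC): given $\mathbf{z}^k$, let $\mathbf{z}^{k+1}$ be an optimal solution of the convex problem: maximize $g(\mathbf{z})+\tfrac12\delta\|\mathbf{z}-\mathbf{z}^k\|^2$ (with a fixed $\delta<0$) subject to $\mathcal{B}^+(\mathbf{z})-\mathcal{B}^-(\mathbf{z}^k)-\mathcal{D}\mathcal{B}^-(\mathbf{z}^k)(\mathbf{z}-\mathbf{z}^k)\preceq 0$; repeat until $\|\mathbf{z}^k-\mathbf{z}^{k-1}\|<\varepsilon$ for a given tolerance $\varepsilon\ge 0$, and return the set of all iterates $\mathbf{z}^0,\dots,\mathbf{z}^k$. *)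

From HB Require Import structures.
From mathcomp Require Import all_boot all_order all_algebra.
From mathcomp Require Import all_classical all_reals all_analysis.
Set Implicit Arguments. Unset Strict Implicit. Unset Printing Implicit Defensive.
Import Order.TTheory GRing.Theory Num.Theory.
Import numFieldNormedType.Exports.
Local Open Scope ring_scope.

(* Decomposition of a block index k : 'I_(a*b) into (block i, inner index r),
   the inverse of mathcomp's mxvec_index (row-major: k = i*b + r). *)
Definition vidx (a b : nat) (k : 'I_(a * b)) : 'I_a * 'I_b :=
  enum_val (cast_ord (esym (mxvec_cast a b)) k).

Section BMI.
Variable R : realType.
Variables m n p : nat.

(* the Kronecker product  z (x) I_p  for a column vector z *)
Definition kronI (a : nat) (z : 'cV[R]_a) : 'M[R]_(a * p, p) :=
  \matrix_(k, s) (z ((vidx k).1) 0 * (((vidx k).2) == s)%:R).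

Definition Gamma (Fij : 'I_m -> 'I_n -> 'M[R]_p) : 'M[R]_(m * p, n * p) :=
  \matrix_(k, l) (2^-1 * Fij ((vidx k).1) ((vidx l).1) ((vidx k).2) ((vidx l).2)).

(* M = [[0, Gamma], [Gamma^T, 0]], indexed consistently with kronI *)
Definition Mmat (Fij : 'I_m -> 'I_n -> 'M[R]_p) : 'M[R]_((m + n) * p) :=
  \matrix_(k, l)
    let ir := vidx k in let js := vidx l in
    match @fintype.split m n ir.1, @fintype.split m n js.1 with
    | inl i, inr j => Gamma Fij (mxvec_index i ir.2) (mxvec_index j js.2)
    | inr j, inl i => (Gamma Fij)^T (mxvec_index j ir.2) (mxvec_index i js.2)
    | _, _ => 0
    end.

(* Omega = (H_1 ... H_m G_1 ... G_n) : p x (m+n)p *)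
Definition Omega (H : 'I_m -> 'M[R]_p) (G : 'I_n -> 'M[R]_p) : 'M[R]_(p, (m + n) * p) :=
  \matrix_(r, l)
    let js := vidx l in
    match @fintype.split m n js.1 with
    | inl i => H i r js.2
    | inr j => G j r js.2
    end.

Definition Bfun (F : 'M[R]_p) (H : 'I_m -> 'M[R]_p) (G : 'I_n -> 'M[R]_p)
  (Fij : 'I_m -> 'I_n -> 'M[R]_p) (z : 'cV[R]_(m + n)) : 'M[R]_p :=
  F + \sum_(i < m) z (lshift n i) 0 *: H i + \sum_(j < n) z (rshift m j) 0 *: G j
    + \sum_(i < m) \sum_(j < n) (z (lshift n i) 0 * z (rshift m j) 0) *: Fij i j.

Definition Dplus (d : 'rV[R]_((m + n) * p)) : 'M[R]_((m + n) * p) :=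
  diag_mx (map_mx (fun t => Num.max t 0) d).
Definition Dminus (d : 'rV[R]_((m + n) * p)) : 'M[R]_((m + n) * p) :=
  Dplus d - diag_mx d.
Definition M1 (V : 'M[R]_((m + n) * p)) d := V^T *m Dplus d *m V.
Definition M2 (V : 'M[R]_((m + n) * p)) d := V^T *m Dminus d *m V.

Definition Bplus (F : 'M[R]_p) H G V d (z : 'cV[R]_(m + n)) : 'M[R]_p :=
  (kronI z)^T *m M1 V d *m kronI z + Omega H G *m kronI z + F.
Definition Bminus V d (z : 'cV[R]_(m + n)) : 'M[R]_p :=
  (kronI z)^T *m M2 V d *m kronI z.

Definition partialD (f : 'cV[R]_(m + n) -> 'M[R]_p) (i : 'I_(m + n)) z : 'M[R]_p :=
  'D_(delta_mx i 0) f z.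
Definition Dfun (f : 'cV[R]_(m + n) -> 'M[R]_p) z (u : 'cV[R]_(m + n)) : 'M[R]_p :=
  \sum_(i < m + n) u i 0 *: partialD f i z.
End BMI.

Definition nsd (R : realType) (p : nat) (A : 'M[R]_p) : Prop :=
  forall v : 'cV[R]_p, (v^T *m A *m v) 0 0 <= 0.
Definition nd (R : realType) (p : nat) (A : 'M[R]_p) : Prop :=
  forall v : 'cV[R]_p, v != 0 -> (v^T *m A *m v) 0 0 < 0.

Definition enorm (R : realType) (a : nat) (z : 'cV[R]_a) : R :=
  Num.sqrt (\sum_(i < a) z i 0 ^+ 2).

Definition sub_feasible (R : realType) (m n p : nat) (F : 'M[R]_p)
  (H : 'I_m -> 'M[R]_p) (G : 'I_n -> 'M[R]_p) (V : 'M[R]_((m + n) * p))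
  (d : 'rV[R]_((m + n) * p)) (zk z : 'cV[R]_(m + n)) : Prop :=
  nsd (Bplus F H G V d z - Bminus V d zk - Dfun (Bminus V d) zk (z - zk)).

Definition sub_obj (R : realType) (a : nat) (c : 'rV[R]_a) (delta : R)
  (zk z : 'cV[R]_a) : R :=
  (c *m z) 0 0 + 2^-1 * delta * enorm (z - zk) ^+ 2.

Definition sub_optimal (R : realType) (m n p : nat) (F : 'M[R]_p)
  (H : 'I_m -> 'M[R]_p) (G : 'I_n -> 'M[R]_p) (V : 'M[R]_((m + n) * p))
  (d : 'rV[R]_((m + n) * p)) (c : 'rV[R]_(m + n)) (delta : R)
  (zk znew : 'cV[R]_(m + n)) : Prop :=
  sub_feasible F H G V d zk znew /\
  forall z, sub_feasible F H G V d zk z ->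
    sub_obj c delta zk z <= sub_obj c delta zk znew.

From HB Require Import structures.
From mathcomp Require Import all_boot all_order all_algebra.
From mathcomp Require Import all_classical all_reals all_analysis.
Import Order.TTheory GRing.Theory Num.Theory.
Import numFieldNormedType.Exports.
Local Open Scope ring_scope.
Set Implicit Arguments. Unset Strict Implicit.

(* The matrix map B^-(z) = (z (x) I)^T M2 (z (x) I) is a quadratic form with
   M2 = V^T D^- V positive semidefinite, so it dominates its linearisations:
   B^-(z) = B^-(z^k) + DB^-(z^k)(z - z^k) + (w (x) I)^T M2 (w (x) I), w = z - z^k.
   As M1 - M2 = M encodes the bilinear part, B = B^+ - B^-, hence every point
   feasible for the convex subproblem at z^k satisfies B(z) <= B^+(z) - B^-(z^k)
   - DB^-(z^k)(z - z^k) <= 0.  The iterates are such points, and z^0 is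
   feasible by assumption. *)

Lemma sum_mxvec_index (V : nmodType) a b (f : 'I_(a * b) -> V) :
  \sum_(k < a * b) f k = \sum_(i < a) \sum_(j < b) f (mxvec_index i j).
Proof.
rewrite pair_big (reindex (uncurry (@mxvec_index a b))) /=;
  last exact: curry_mxvec_bij.
by apply: eq_bigr => -[i j].
Qed.

Lemma vidxK a b (i : 'I_a) (j : 'I_b) : vidx (mxvec_index i j) = (i, j).
Proof. by rewrite /vidx /mxvec_index cast_ordK enum_rankK. Qed.

Lemma split_lshift m n (i : 'I_m) : fintype.split (lshift n i) = inl i.
Proof. exact: (unsplitK (inl i)). Qed.

Lemma split_rshift m n (j : 'I_n) : fintype.split (rshift m j) = inr j.
Proof. exact: (unsplitK (inr j)). Qed.

Lemma sum_mul_nat_eq (R : pzSemiRingType) k (F : 'I_k -> R) s :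
  \sum_(r < k) F r * (r == s)%:R = F s.
Proof.
by rewrite (bigD1 s) //= eqxx mulr1 big1 ?addr0 // => r /negbTE->; rewrite mulr0.
Qed.

Section KronI.
Variables (R : realType) (p : nat).

Fact kronI_is_semilinear a : semilinear (@kronI R p a).
Proof. by split=> [c x|x y]; apply/matrixP => k s; rewrite !mxE (mulrA, mulrDl). Qed.

HB.instance Definition _ a :=
  GRing.isSemilinear.Build R 'cV[R]_a 'M[R]_(a * p, p) _ (@kronI R p a)
    (kronI_is_semilinear a).

Lemma mulmx_kronIE a q (A : 'M[R]_(q, a * p)) (z : 'cV[R]_a) r s :
  (A *m kronI p z) r s = \sum_(i < a) z i 0 * A r (mxvec_index i s).
Proof.
rewrite mxE sum_mxvec_index; apply: eq_bigr => i _.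
under eq_bigr do rewrite mxE vidxK /= mulrA.
by rewrite sum_mul_nat_eq mulrC.
Qed.

Lemma kronI_quadE a (M : 'M[R]_(a * p)) (z : 'cV[R]_a) r s :
  ((kronI p z)^T *m M *m kronI p z) r s =
  \sum_(i < a) \sum_(j < a) z i 0 * z j 0 * M (mxvec_index i r) (mxvec_index j s).
Proof.
rewrite mulmx_kronIE exchange_big /=; apply: eq_bigr => j _.
rewrite -[_ *m M]trmxK trmx_mul trmxK mxE mulmx_kronIE mulr_sumr.
by apply: eq_bigr => i _; rewrite !mxE mulrCA mulrA.
Qed.
End KronI.

Section BlockMatrices.
Variables (R : realType) (m n p : nat).
Implicit Types (z : 'cV[R]_(m + n)) (Fij : 'I_m -> 'I_n -> 'M[R]_p).

Lemma Omega_kronI (H : 'I_m -> 'M[R]_p) (G : 'I_n -> 'M[R]_p) z :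
  Omega H G *m kronI p z =
  \sum_(i < m) z (lshift n i) 0 *: H i + \sum_(j < n) z (rshift m j) 0 *: G j.
Proof.
apply/matrixP => r s; rewrite mulmx_kronIE big_split_ord !mxE !summxE.
by congr (_ + _); apply: eq_bigr => i _;
  rewrite !mxE vidxK /= (split_lshift, split_rshift).
Qed.

Lemma Mmat_quad Fij z :
  (forall i j, (Fij i j)^T = Fij i j) ->
  (kronI p z)^T *m Mmat Fij *m kronI p z =
  \sum_(i < m) \sum_(j < n) (z (lshift n i) 0 * z (rshift m j) 0) *: Fij i j.
Proof.
move=> Fij_sym; apply/matrixP => r s; rewrite kronI_quadE !summxE big_split_ord /=.
rewrite [X in X + _](eq_bigr (fun i => \sum_(j < n)
    2^-1 * (z (lshift n i) 0 * z (rshift m j) 0 * Fij i j r s))); last first.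
  move=> i _; rewrite big_split_ord /= big1 ?add0r => [|i' _]; last first.
    by rewrite /Mmat mxE !vidxK /= ?split_lshift ?split_rshift mulr0.
  apply: eq_bigr => j _.
  by rewrite /Mmat mxE !vidxK /= ?split_lshift ?split_rshift mxE !vidxK /= mulrCA.
rewrite [X in _ + X](eq_bigr (fun j => \sum_(i < m)
    2^-1 * (z (lshift n i) 0 * z (rshift m j) 0 * Fij i j r s))); last first.
  move=> j _; rewrite big_split_ord /= [X in _ + X]big1 ?addr0 => [|j' _]; last first.
    by rewrite /Mmat mxE !vidxK /= ?split_lshift ?split_rshift mulr0.
  apply: eq_bigr => i _.
  rewrite /Mmat mxE !vidxK /= ?split_lshift ?split_rshift !mxE !vidxK /=.
  by rewrite -[in Fij i j s r]Fij_sym mxE mulrCA (mulrC (z (rshift m j) 0)).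
rewrite [X in _ + X]exchange_big -big_split /=; apply: eq_bigr => i _.
rewrite summxE -big_split /=; apply: eq_bigr => j _.
by rewrite !mxE !(mulrC 2^-1) -splitr.
Qed.
End BlockMatrices.

Section QuadraticForms.
Variable R : comNzRingType.

Lemma quad_formD k q (M : 'M[R]_k) (Y Z : 'M[R]_(k, q)) :
  (Y + Z)^T *m M *m (Y + Z) =
  Y^T *m M *m Y + (Y^T *m M *m Z + Z^T *m M *m Y) + Z^T *m M *m Z.
Proof. by rewrite [(Y + Z)^T]linearD /= !mulmxDl !mulmxDr !addrA. Qed.

Lemma quad_formZ k q (M : 'M[R]_k) (Y : 'M[R]_(k, q)) c :
  (c *: Y)^T *m M *m (c *: Y) = (c * c) *: (Y^T *m M *m Y).
Proof. by rewrite [(c *: Y)^T]linearZ /= -!scalemxAl -scalemxAr scalerA. Qed.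

Lemma polar_formZ k q (M : 'M[R]_k) (Y Z : 'M[R]_(k, q)) c :
  (c *: Y)^T *m M *m Z + Z^T *m M *m (c *: Y) = c *: (Y^T *m M *m Z + Z^T *m M *m Y).
Proof. by rewrite [(c *: Y)^T]linearZ /= -!scalemxAl -scalemxAr scalerDr. Qed.
End QuadraticForms.

Section Derivatives.
Variable R : realType.
Local Open Scope classical_set_scope.

Lemma derive_affine_quotient (V W : normedModType R) (f : V -> W) a v A B :
  (forall h : R, h != 0 -> h^-1 *: (f (h *: v + a) - f a) = A + h *: B) ->
  'D_v f a = A.
Proof.
move=> quotientE; apply: cvg_lim; first exact: norm_hausdorff.
have affine_cvg : (fun h : R => A + h *: B) @ 0^' --> A.
  apply: cvg_within_filter.
  have := cvgD (cvg_cst A) (cvgZ (@cvg_id _ (nbhs (0 : R))) (cvg_cst B)).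
  by rewrite scale0r addr0; apply.
apply: cvg_trans affine_cvg; apply: near_eq_cvg; near=> h.
by rewrite /= quotientE //; near: h; exact: nbhs_dnbhs_neq.
Unshelve. all: by end_near.
Qed.

Lemma derive_quad_form a k q (X : {linear 'cV[R]_a -> 'M[R]_(k, q)}) (M : 'M[R]_k) z u :
  'D_u (fun z => (X z)^T *m M *m X z) z = (X u)^T *m M *m X z + (X z)^T *m M *m X u.
Proof.
apply: (derive_affine_quotient (B := (X u)^T *m M *m X u)) => h h_neq0.
rewrite [X (_ + _)]linearD [X (_ *: _)]linearZ /= quad_formD polar_formZ quad_formZ.
by rewrite addrK scalerDr !scalerA mulKf // mulVf // scale1r addrC.
Qed.
End Derivatives.

Section Semidefinite.
Variable R : realType.

Definition psd k (A : 'M[R]_k) : Prop := forall v : 'cV[R]_k, 0 <= (v^T *m A *m v) 0 0.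

Lemma psd_congr k q (M : 'M[R]_k) (Y : 'M[R]_(k, q)) : psd M -> psd (Y^T *m M *m Y).
Proof. by move=> psdM v; have := psdM (Y *m v); rewrite trmx_mul !mulmxA. Qed.

Lemma psd_diag k (e : 'rV[R]_k) : (forall j, 0 <= e 0 j) -> psd (diag_mx e).
Proof.
move=> e_ge0 v; rewrite mul_mx_diag mxE; apply: sumr_ge0 => j _.
by rewrite !mxE mulrAC -expr2 mulr_ge0 ?sqr_ge0.
Qed.

Lemma nd_nsd k (A : 'M[R]_k) : nd A -> nsd A.
Proof.
move=> ndA v; have [->|v_neq0] := eqVneq v 0; first by rewrite mulmx0 mxE.
exact/ltW/ndA.
Qed.

Lemma nsdB_psd k (A B : 'M[R]_k) : nsd A -> psd B -> nsd (A - B).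
Proof.
have entryB (X Y : 'M[R]_1) : (X - Y) 0 0 = X 0 0 - Y 0 0 by rewrite !mxE.
move=> nsdA psdB v; rewrite mulmxBr mulmxBl entryB subr_le0.
exact: le_trans (nsdA v) (psdB v).
Qed.
End Semidefinite.

Section DCDecomposition.
Variables (R : realType) (m n p : nat).
Variables (F : 'M[R]_p) (H : 'I_m -> 'M[R]_p) (G : 'I_n -> 'M[R]_p).
Variables (Fij : 'I_m -> 'I_n -> 'M[R]_p).
Variables (V : 'M[R]_((m + n) * p)) (d : 'rV[R]_((m + n) * p)).
Implicit Types z : 'cV[R]_(m + n).

Lemma psd_M2 : psd (M2 V d).
Proof.
rewrite /M2 /Dminus /Dplus -linearB; apply/psd_congr/psd_diag => j.
by rewrite !mxE subr_ge0 le_max lexx.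
Qed.

Lemma Dfun_quad_form (M : 'M[R]_((m + n) * p)) zk u :
  Dfun (fun z => (kronI p z)^T *m M *m kronI p z) zk u =
  (kronI p u)^T *m M *m kronI p zk + (kronI p zk)^T *m M *m kronI p u.
Proof.
rewrite /Dfun /partialD; under eq_bigr do rewrite derive_quad_form.
have -> : kronI p u = \sum_i u i 0 *: kronI p (delta_mx i 0).
  rewrite {1}(matrix_sum_delta u) linear_sum; apply: eq_bigr => i _.
  by rewrite big_ord1 linearZ.
rewrite !linear_sum /= !mulmx_suml -big_split /=.
by apply: eq_bigr => i _; rewrite polar_formZ.
Qed.

Lemma Bminus_expand zk z :
  Bminus V d z = Bminus V d zk + Dfun (Bminus V d) zk (z - zk)
    + (kronI p (z - zk))^T *m M2 V d *m kronI p (z - zk).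
Proof.
rewrite /Bminus Dfun_quad_form [_ + (kronI p zk)^T *m _ *m _]addrC -quad_formD.
by rewrite -linearD [zk + _]addrC subrK.
Qed.

Hypothesis Fij_sym : forall i j, (Fij i j)^T = Fij i j.
Hypothesis Mmat_eig : Mmat Fij = V^T *m diag_mx d *m V.

Lemma Bfun_DC z : Bfun F H G Fij z = Bplus F H G V d z - Bminus V d z.
Proof.
have M1_subM2 : M1 V d - M2 V d = Mmat Fij.
  by rewrite Mmat_eig /M1 /M2 -mulmxBl -mulmxBr /Dminus opprB addrC subrK.
rewrite /Bfun /Bplus /Bminus Omega_kronI -Mmat_quad // -M1_subM2 mulmxBr mulmxBl.
by rewrite addrA; congr (_ - _); rewrite addrC -addrA [F + _]addrC addrA.
Qed.

Lemma nsd_Bfun_sub_feasible zk z :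
  sub_feasible F H G V d zk z -> nsd (Bfun F H G Fij z).
Proof.
move=> feasible; rewrite Bfun_DC (Bminus_expand zk z) !opprD !addrA.
exact: nsdB_psd feasible (psd_congr _ psd_M2).
Qed.
End DCDecomposition.

Theorem theorem9 (R : realType) (m n p : nat)
  (F : 'M[R]_p) (H : 'I_m -> 'M[R]_p) (G : 'I_n -> 'M[R]_p)
  (Fij : 'I_m -> 'I_n -> 'M[R]_p)
  (V : 'M[R]_((m + n) * p)) (d : 'rV[R]_((m + n) * p))
  (c : 'rV[R]_(m + n)) (delta eps : R)
  (N : nat) (z : nat -> 'cV[R]_(m + n)) :
  F^T = F ->
  (forall i, (H i)^T = H i) ->
  (forall j, (G j)^T = G j) ->
  (forall i j, (Fij i j)^T = Fij i j) ->
  V^T *m V = 1%:M ->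
  Mmat Fij = V^T *m diag_mx d *m V ->
  delta < 0 ->
  0 <= eps ->
  nd (Bfun F H G Fij (z 0%N)) ->
  (forall k, (k < N)%N -> sub_optimal F H G V d c delta (z k) (z k.+1)) ->
  (forall k, (0 < k < N)%N -> eps <= enorm (z k - z k.-1)) ->
  forall i, (i <= N)%N -> nsd (Bfun F H G Fij (z i)).
Proof.
move=> _ _ _ Fij_sym _ Mmat_eig _ _ nd_z0 z_optimal _ [|k] k_lt_N.
  exact: nd_nsd.
have [feasible _] := z_optimal k k_lt_N.
exact: nsd_Bfun_sub_feasible Fij_sym Mmat_eig _ _ feasible.
Qed.
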